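(* There is an absolute constant $C$ such that for every $\epsilon\in(0,1]$ there is an $\epsilon$-edge differentially private algorithm which, given a graph $G$ on $n\ge3$ vertices, outputs a real number $\hat\rho$ with $|\hat\rho-\rho(G)|\le C\sqrt{\log(n)/\epsilon}$ with probability at least $1-1/n$.
   Context: For nonempty $S\subseteq V$, $\rho(S)=|E(S)|/|S|$ with $E(S)$ the edges inside $S$, and $\rho(G)=\max_{\emptyset\ne S\subseteq V}\rho(S)$. Edge-neighboring graphs have the same vertex set and edge sets differing in exactly one edge; an algorithm is $\epsilon$-edge DP if $\Pr[\mathcal A(G)\in O]\le e^\epsilon\Pr[\mathcal A(G')\in O]$ for all edge-neighboring $G,G'$ and all output sets $O$. $\log$ is the natural logarithm. *)

From HB Require Import structures.
From mathcomp Require Import all_boot all_order all_algebra.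
From mathcomp Require Import all_classical all_reals all_analysis.
Set Implicit Arguments. Unset Strict Implicit. Unset Printing Implicit Defensive.
Import Order.TTheory GRing.Theory Num.Theory.

Definition is_simple_graph (n : nat) (E : {set {set 'I_n}}) : bool :=
  [forall e in E, #|e| == 2].

Definition sgraph (n : nat) := {E : {set {set 'I_n}} | is_simple_graph E}.

Definition edges (n : nat) (G : sgraph n) : {set {set 'I_n}} := sval G.

Definition edge_neighbors (n : nat) (G G' : sgraph n) : Prop :=
  #|(edges G :\: edges G') :|: (edges G' :\: edges G)| = 1%N.

Local Open Scope ring_scope.

Definition inner_edges (n : nat) (G : sgraph n) (S : {set 'I_n}) : {set {set 'I_n}} :=
  [set e in edges G | e \subset S].

Definition density (R : realType) (n : nat) (G : sgraph n) (S : {set 'I_n}) : R :=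
  (#|inner_edges G S|%:R) / (#|S|%:R).

(* rho(G) = max over nonempty S of rho(S)  (all values are >= 0, so
   starting the max at 0 is harmless) *)
Definition max_density (R : realType) (n : nat) (G : sgraph n) : R :=
  \big[Num.max/0]_(S : {set 'I_n} | (0 < #|S|)%N) density R G S.

(* Run the exponential mechanism on the candidate outputs sqrt k, k = 0 .. n^2,
   scoring sqrt k by |k - rho(G)^2|.  The square of the maximum density has
   edge sensitivity at most 1: if S attains rho(G) with a edges, then
   rho(G') >= (a - 1)/|S| and 2a <= |S|(|S|-1).  Hence the mechanism is
   eps-DP, and with probability 1 - 1/n it outputs some sqrt k with
   |k - rho^2| <= 16 log n / eps.  Since |sqrt k - rho|^2 <= |k - rho^2|, the
   output is within 4 sqrt(log n / eps) of rho(G). *)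

From HB Require Import structures.
From mathcomp Require Import all_boot all_order all_algebra.
From mathcomp Require Import all_classical all_reals all_analysis.
From mathcomp Require Import ring lra zify.
Set Implicit Arguments. Unset Strict Implicit. Unset Printing Implicit Defensive.
Import Order.TTheory GRing.Theory Num.Theory.

Local Open Scope ring_scope.

Lemma sqr_dist_le_dist_sqr (R : realDomainType) (u r : R) : 0 <= u -> 0 <= r ->
  `|u - r| ^+ 2 <= `|u ^+ 2 - r ^+ 2|.
Proof.
move=> u0 r0; rewrite subr_sqr normrM [`|u + r|]ger0_norm ?addr_ge0 // expr2.
by rewrite ler_wpM2l // ler_norml; apply/andP; split; lra.
Qed.

Lemma sqr_ratio_sub_le1 (R : realFieldType) (a b s r : R) :
  1 <= s -> a <= b + 1 -> a * 2 <= s * (s - 1) -> b / s <= r -> 0 <= r ->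
  0 <= a -> (a / s) ^+ 2 - r ^+ 2 <= 1.
Proof.
move=> s1 ab as2 br r0 a0.
have s0 : 0 < s by lra.
case: (leP (a / s) r) => [ar|ra].
  have : (a / s) ^+ 2 <= r ^+ 2 by rewrite ler_sqr ?nnegrE ?divr_ge0 // ltW.
  lra.
have bs : b <= r * s by rewrite -ler_pdivrMr.
have as_ : a / s * s = a by rewrite divfK ?gt_eqF.
have diff_le : (a / s - r) * s <= 1 by nra.
have sum_le : (a / s + r) * s <= s * s by nra.
rewrite -(ler_pM2r (exprn_gt0 2 s0)) mul1r.
have -> : ((a / s) ^+ 2 - r ^+ 2) * s ^+ 2 = ((a / s - r) * s) * ((a / s + r) * s)
  by ring.
nra.
Qed.

Lemma sqrS_div_pow8_le (R : realFieldType) (N : R) : 3 <= N ->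
  (N * N + 1) / N ^+ 8 <= N^-1 / 2.
Proof.
move=> N3; have N0 : 0 < N by lra.
have N7 : 2 * (N * N + 1) <= N ^+ 7.
  have : 3 ^+ 5 <= N ^+ 5 by rewrite lerXn2r ?nnegrE //; lra.
  rewrite (_ : N ^+ 7 = N ^+ 2 * N ^+ 5); last by ring.
  nra.
rewrite ler_pdivrMr ?exprn_gt0 //.
rewrite (_ : _ / 2 * _ = N ^+ 7 / 2); last by field; rewrite gt_eqF.
lra.
Qed.

Section ExponentialMechanism.
Local Open Scope classical_set_scope.
Variables (R : realType) (eps : R) (K : nat) (x : nat -> R).
Implicit Types (score : nat -> R) (O : set R).

Definition expmech_weight score k : R := expR (- (eps / 2) * score k).

Definition expmech_mass score O : R :=
  \sum_(k < K.+1) expmech_weight score k * \1_O (x k).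

Definition expmech_norm score : R := \sum_(k < K.+1) expmech_weight score k.

Definition expmech_measure score : {measure set R -> \bar R} :=
  msum (fun k => mscale (NngNum (ltW (expR_gt0 (- (eps / 2) * score k))))
                        (@dirac _ R (x k) R)) K.+1.

(* The candidates are x 0, ..., x K; the fallback [dirac 0] of [mnormalize] is
   never used, since the total mass is positive and finite. *)
Definition expmech score : probability R R :=
  mnormalize (expmech_measure score) (@dirac _ R 0 R).

Lemma expmech_norm_gt0 score : 0 < expmech_norm score.
Proof.
rewrite /expmech_norm big_ord_recl /=; apply: ltr_pwDl; first exact: expR_gt0.
by apply: sumr_ge0 => i _; exact: ltW (expR_gt0 _).
Qed.

Lemma expmech_measureE score O : expmech_measure score O = (expmech_mass score O)%:E.
Proof.
rewrite /= /msum /expmech_mass -sumEFin; apply: eq_bigr => k _.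
by rewrite /mscale /= /dirac EFinM.
Qed.

Lemma expmech_mass_ge0 score O : 0 <= expmech_mass score O.
Proof.
by apply: sumr_ge0 => k _; apply: mulr_ge0; [exact/ltW/expR_gt0 | rewrite indicE].
Qed.

Lemma expmech_massT score : expmech_mass score setT = expmech_norm score.
Proof. by apply: eq_bigr => k _; rewrite indicE in_setT mulr1. Qed.

Lemma expmechE score O :
  expmech score O = (expmech_mass score O / expmech_norm score)%:E.
Proof.
rewrite /expmech /= /mnormalize expmech_measureE expmech_massT /=.
rewrite ifF; first by rewrite expmech_measureE EFinM.
by rewrite orbF eqe gt_eqF // expmech_norm_gt0.
Qed.

Lemma expmech_weight_le_norm score k :
  (k <= K)%N -> expmech_weight score k <= expmech_norm score.
Proof.
rewrite -ltnS => kK; rewrite /expmech_norm (bigD1 (Ordinal kK)) //= lerDl.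
by apply: sumr_ge0 => i _; exact: ltW (expR_gt0 _).
Qed.

Hypothesis eps_ge0 : 0 <= eps.

Lemma expmech_weight_lipschitz score score' k : `|score k - score' k| <= 1 ->
  expmech_weight score k <= expR (eps / 2) * expmech_weight score' k.
Proof.
rewrite ler_norml /expmech_weight -expRD ler_expR => /andP[ge1 _].
have : 0 <= eps / 2 by rewrite divr_ge0.
nra.
Qed.

Lemma expmech_dp score score' : (forall k, `|score k - score' k| <= 1) ->
  forall O, (expmech score O <= (expR eps)%:E * expmech score' O)%E.
Proof.
move=> lip O; rewrite !expmechE -EFinM lee_fin.
have mass_le : expmech_mass score O <= expR (eps / 2) * expmech_mass score' O.
  rewrite mulr_sumr; apply: ler_sum => k _; rewrite mulrA ler_wpM2r //.
  exact: expmech_weight_lipschitz.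
have norm_le : expmech_norm score' <= expR (eps / 2) * expmech_norm score.
  rewrite mulr_sumr; apply: ler_sum => k _.
  by apply: expmech_weight_lipschitz; rewrite distrC.
have N0 := expmech_norm_gt0 score; have N'0 := expmech_norm_gt0 score'.
have -> : expR eps = expR (eps / 2) * expR (eps / 2) by rewrite -expRD -splitr.
rewrite ler_pdivrMr // (_ : _ * _ * _ = expR (eps / 2) * expmech_mass score' O
  * (expR (eps / 2) * expmech_norm score) / expmech_norm score'); last first.
  by field; rewrite gt_eqF.
rewrite ler_pdivlMr //.
by apply: ler_pM => //; [exact: expmech_mass_ge0 | exact: ltW].
Qed.

Lemma expmech_accuracy score O (t : R) :
  (forall k, (k <= K)%N -> ~ O (x k) -> t <= score k) ->
  ((1 - K.+1%:R * expR (- (eps / 2) * t) / expmech_norm score)%:E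
     <= expmech score O)%E.
Proof.
move=> far; rewrite expmechE lee_fin.
have N0 := expmech_norm_gt0 score.
have miss k : (k <= K)%N ->
    expmech_weight score k * (1 - \1_O (x k)) <= expR (- (eps / 2) * t).
  move=> kK; rewrite indicE; case: (boolP (x k \in O)) => [_|/negP xO].
    by rewrite subrr mulr0 ltW // expR_gt0.
  rewrite subr0 mulr1 ler_expR !mulNr lerN2 ler_wpM2l ?divr_ge0 //.
  by apply: far => // /mem_set.
have massE : expmech_mass score O = expmech_norm score
    - \sum_(k < K.+1) expmech_weight score k * (1 - \1_O (x k)).
  by rewrite -sumrB; apply: eq_bigr => k _; ring.
have miss_sum : \sum_(k < K.+1) expmech_weight score k * (1 - \1_O (x k))
    <= K.+1%:R * expR (- (eps / 2) * t).
  apply: le_trans (_ : \sum_(k < K.+1) expR (- (eps / 2) * t) <= _).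
    by apply: ler_sum => k _; apply: miss; rewrite -ltnS.
  by rewrite sumr_const card_ord mulr_natl.
rewrite ler_pdivlMr // mulrBl mul1r divfK ?gt_eqF // massE.
by rewrite lerB.
Qed.

End ExponentialMechanism.

Section MaxDensity.
Variables (R : realType) (n : nat).
Implicit Types (G : sgraph n) (S : {set 'I_n}).

Lemma density_ge0 G S : 0 <= density R G S.
Proof. by rewrite /density divr_ge0. Qed.

Lemma max_density_ge0 G : 0 <= max_density R G.
Proof.
apply: (big_ind (fun x : R => 0 <= x)) => // [x y x0 y0|S _].
  by rewrite le_max x0.
exact: density_ge0.
Qed.

Lemma le_max_density G S : (0 < #|S|)%N -> density R G S <= max_density R G.
Proof. by move=> S0; apply: le_bigmax_cond. Qed.

Lemma max_density_attained G : max_density R G = 0 \/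
  exists2 S : {set 'I_n}, (0 < #|S|)%N & max_density R G = density R G S.
Proof.
apply: (big_ind (fun x : R => x = 0 \/
  exists2 S : {set 'I_n}, (0 < #|S|)%N & x = density R G S)) => [|x y Px Py|S S0].
- by left.
- by case: (leP x y).
- by right; exists S.
Qed.

Lemma card_inner_edges_le G S : (#|inner_edges G S| * 2 <= #|S| * #|S|.-1)%N.
Proof.
have sub_pairs : inner_edges G S \subset [set e : {set 'I_n} | e \subset S & #|e| == 2%N].
  apply/fintype.subsetP => e; rewrite !inE => /andP[eG ->] /=.
  by case: G eG => E /= /forall_inP; apply.
have := mul_bin_diag #|S| 1; rewrite bin1 => ->; rewrite mulnC leq_mul2l /=.
by rewrite -cards_draws subset_leq_card.
Qed.

Lemma card_inner_edges_neighbor G G' S : edge_neighbors G G' ->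
  (#|inner_edges G S| <= #|inner_edges G' S| + 1)%N.
Proof.
rewrite /edge_neighbors; set D := _ :|: _ => D1.
have sub : inner_edges G S \subset inner_edges G' S :|: D.
  apply/fintype.subsetP => e; rewrite !inE => /andP[eG eS].
  by case: (boolP (e \in edges G')) => eG'; rewrite ?eG ?eG' ?eS.
by apply: leq_trans (subset_leq_card sub) _; rewrite -D1 cardsU leq_subr.
Qed.

Lemma edge_neighbors_sym G G' : edge_neighbors G G' -> edge_neighbors G' G.
Proof. by rewrite /edge_neighbors finset.setUC. Qed.

Lemma max_density_le G : max_density R G <= n%:R.
Proof.
apply/bigmax_leP; split => // S S0.
rewrite /density ler_pdivrMr ?ltr0n // -natrM ler_nat.
have Sn : (#|S| <= n)%N by rewrite -[n in (_ <= n)%N]card_ord max_card.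
have := card_inner_edges_le G S; nia.
Qed.

Lemma sqr_max_density_sub_le1 G G' : edge_neighbors G G' ->
  max_density R G ^+ 2 - max_density R G' ^+ 2 <= 1.
Proof.
move=> GG'; have rho'0 := max_density_ge0 G'.
case: (max_density_attained G) => [->|[S S0 ->]].
  by rewrite expr0n /= sub0r lerNl (le_trans _ (exprn_ge0 2 rho'0)).
apply: (@sqr_ratio_sub_le1 _ _ #|inner_edges G' S|%:R) => //.
- by rewrite ler1n.
- by rewrite natr1 ler_nat -addn1 card_inner_edges_neighbor.
- have S1 : (#|S|%:R - 1 : R) = #|S|.-1%:R by rewrite -{1}(prednK S0) -natr1 addrK.
  by rewrite S1 -!natrM ler_nat card_inner_edges_le.
- exact: le_max_density.
Qed.

Lemma sqr_max_density_lipschitz G G' : edge_neighbors G G' ->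
  `|max_density R G ^+ 2 - max_density R G' ^+ 2| <= 1.
Proof.
move=> GG'; rewrite ler_norml sqr_max_density_sub_le1 // andbT lerNl opprB.
exact/sqr_max_density_sub_le1/edge_neighbors_sym.
Qed.

End MaxDensity.

Section DensityMechanism.
Local Open Scope classical_set_scope.
Variables (R : realType) (eps : R) (n : nat).
Implicit Types (G : sgraph n).

Definition density_score G (k : nat) : R := `|k%:R - max_density R G ^+ 2|.

Definition density_mechanism G : probability R R :=
  expmech eps (n * n) (fun k => Num.sqrt k%:R) (density_score G).

Lemma density_mechanism_dp G G' : 0 <= eps -> edge_neighbors G G' ->
  forall O, (density_mechanism G O <= (expR eps)%:E * density_mechanism G' O)%E.
Proof.
move=> eps0 GG'; apply: expmech_dp => // k.
apply: le_trans (ler_dist_dist _ _) _.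
by rewrite opprB addrC addrA subrK distrC sqr_max_density_lipschitz.
Qed.

Lemma density_mechanism_norm_ge_half G : 0 <= eps <= 1 ->
  1 / 2 <= expmech_norm eps (n * n) (density_score G).
Proof.
move=> /andP[eps0 eps1].
set rho := max_density R G.
have rho0 : 0 <= rho := max_density_ge0 R G.
(* The single candidate floor(rho^2) already has weight >= 1 - eps/2. *)
have := truncn_itv (exprn_ge0 2 rho0); set k := Num.truncn _ => /andP[lo hi].
have kn : (k <= n * n)%N.
  rewrite -(ler_nat R) natrM; apply: le_trans lo _.
  by rewrite expr2; apply: ler_pM => //; exact: max_density_le.
apply: le_trans (expmech_weight_le_norm _ _ kn).
have score_le1 : density_score G k <= 1.
  rewrite /density_score distrC ger0_norm ?subr_ge0 // -/rho.
  by move: hi; rewrite -natr1; lra.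
have := expR_ge1Dx (- (eps / 2) * density_score G k).
rewrite /expmech_weight; nra.
Qed.

Lemma density_mechanism_accuracy G : 0 < eps <= 1 -> (3 <= n)%N ->
  ((1 - n%:R^-1)%:E <= density_mechanism G
     [set x : R | (`|x - max_density R G| <= 4 * Num.sqrt (ln n%:R / eps))%R])%E.
Proof.
move=> /andP[eps0 eps1] n3.
set rho := max_density R G; set T := 4 * _.
have N3 : 3 <= n%:R :> R by rewrite (ler_nat R 3 n).
have lnn_eps0 : 0 <= ln (n%:R : R) / eps.
  by apply: divr_ge0; [rewrite ln_ge0 //; lra | exact: ltW].
have T0 : 0 <= T by rewrite mulr_ge0 ?sqrtr_ge0.
have far k : (k <= n * n)%N -> ~ `|Num.sqrt k%:R - rho| <= T ->
    T ^+ 2 <= density_score G k.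
  move=> _ /negP; rewrite -ltNge => Tlt.
  have := sqr_dist_le_dist_sqr (sqrtr_ge0 (k%:R : R)) (max_density_ge0 R G).
  rewrite sqr_sqrtr ?ler0n //; apply: le_trans.
  by rewrite lerXn2r ?nnegrE // ltW.
have tail : expR (- (eps / 2) * T ^+ 2) = (n%:R ^+ 8)^-1.
  rewrite exprMn sqr_sqrtr // (_ : _ * _ = - (8%:R * ln (n%:R : R))).
    by rewrite expRN expRM_natl lnK // posrE; lra.
  by field; rewrite gt_eqF.
apply: le_trans (expmech_accuracy (ltW eps0) far); rewrite lee_fin lerB //.
have norm_ge : 1 / 2 <= expmech_norm eps (n * n) (density_score G).
  by apply: density_mechanism_norm_ge_half; rewrite ltW.
rewrite tail ler_pdivrMr ?expmech_norm_gt0 //.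
apply: le_trans (_ : n%:R^-1 / 2 <= _).
  by rewrite -natr1 natrM sqrS_div_pow8_le.
by apply: ler_wpM2l; rewrite ?invr_ge0 // -div1r.
Qed.

End DensityMechanism.

Local Open Scope classical_set_scope.

Theorem mainTheorem14 (R : realType) :
  exists C : R, forall eps : R, 0 < eps <= 1 ->
    exists A : forall n : nat, sgraph n -> probability R R,
      (forall (n : nat) (G G' : sgraph n), edge_neighbors G G' ->
         forall O : set R, measurable O ->
           (A n G O <= (expR eps)%:E * A n G' O)%E) /\
      (forall (n : nat) (G : sgraph n), (3 <= n)%N ->
         (A n G [set x : R | (`|x - max_density R G| <= C * Num.sqrt (ln (n%:R) / eps))%R]
            >= (1 - (n%:R)^-1)%:E)%E).
Proof.
exists 4 => eps /andP[eps0 eps1].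
exists (fun n G => density_mechanism eps G); split.
- by move=> n G G' GG' O _; apply: density_mechanism_dp; rewrite ?ltW.
- by move=> n G n3; apply: density_mechanism_accuracy; rewrite ?eps0.
Qed.
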